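(* Let $G$ be a graph on $V$, let $W\subseteq V$ be reducible in $G$, and let $W_1,W_2\subseteq V\setminus W$. Then $$\operatorname{rank}_{\Gamma_W(G)}(W_1,W_2)=\operatorname{rank}_G(W\cup W_1,\,W\cup W_2)-\operatorname{rank}_G(W).$$
   Context: A graph means a finite simple graph in which loops are allowed, with adjacency matrix $A$ over $\mathbf F_2$ ($A_{vv}=1$ iff $v$ has a loop). Let $\mathcal V$ be the $\mathbf F_2$-vector space with basis $V$ and $\mathcal E(x,y)=x^TAy$. For $W\subseteq V$, $\langle W\rangle$ is the span of $W$ and $\langle W\rangle^{\perp\mathcal E}=\{x\in\mathcal V:\mathcal E(x,w)=0\ \forall w\in\langle W\rangle\}$. $W$ is reducible in $G$ if $\langle W\rangle+\langle W\rangle^{\perp\mathcal E}=\mathcal V$. For reducible $W$, $\mathcal E^W(x_1,x_2)=\mathcal E(x_1',x_2')$ where $x_i'\in\langle W\rangle^{\perp\mathcal E}$ with $x_i-x_i'\in\langle W\rangle$ (well defined), and the graph reduction $\Gamma_W(G)$ is the graph on $V\setminus W$ in which $v,w$ (possibly equal) are joined iff $\mathcal E^W(v,w)=1$. For a graph $H$ and vertex subsets $W_1,W_2$, $\operatorname{rank}_H(W_1,W_2)$ is the rank over $\mathbf F_2$ of the submatrix of the adjacency matrix of $H$ with rows $W_1$ and columns $W_2$, and $\operatorname{rank}_H(W)=\operatorname{rank}_H(W,W)$. *)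

From HB Require Import structures.
From mathcomp Require Import all_boot all_order all_algebra.
Set Implicit Arguments. Unset Strict Implicit. Unset Printing Implicit Defensive.
Import GRing.Theory.
Local Open Scope ring_scope.

(* A graph on the finite vertex type V is a symmetric relation adj : rel V;
   loops are allowed (adj v v may be true).  Its adjacency matrix over F_2
   has entry (adj v w)%:R. *)

Definition vec (V : finType) := {ffun V -> 'F_2}.

Definition bvec (V : finType) (v : V) : vec V := [ffun u => (u == v)%:R].

Definition Eform (V : finType) (adj : rel V) (x y : vec V) : 'F_2 :=
  \sum_(v : V) \sum_(w : V) x v * (adj v w)%:R * y w.

Definition span (V : finType) (W : {set V}) : pred (vec V) :=
  [pred x : vec V | [forall v, (v \notin W) ==> (x v == 0)]].

Definition perpE (V : finType) (adj : rel V) (W : {set V}) : pred (vec V) :=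
  [pred x : vec V | [forall y : vec V, (y \in span W) ==> (Eform adj x y == 0)]].

Definition reducible (V : finType) (adj : rel V) (W : {set V}) : Prop :=
  forall x : vec V, exists y z : vec V,
    [/\ y \in span W, z \in perpE adj W & x = y + z].

(* E^W(x1,x2) = E(x1',x2') with x_i' in <W>^perp, x_i - x_i' in <W>
   (well defined for reducible W; stated here with an existential). *)
Definition EW (V : finType) (adj : rel V) (W : {set V}) (x1 x2 : vec V) : bool :=
  [exists x1' : vec V, exists x2' : vec V,
    [&& x1' \in perpE adj W, x2' \in perpE adj W,
        (x1 - x1') \in span W, (x2 - x2') \in span W &
        Eform adj x1' x2' == 1]].

(* Graph reduction Gamma_W(G): graph on V \ W, represented as a relation on V
   that is false whenever an endpoint lies in W. *)
Definition gamma (V : finType) (adj : rel V) (W : {set V}) : rel V :=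
  fun v w => [&& v \notin W, w \notin W & EW adj W (bvec v) (bvec w)].

Definition rankG (V : finType) (adj : rel V) (W1 W2 : {set V}) : nat :=
  \rank (\matrix_(i < #|W1|, j < #|W2|)
           ((adj (enum_val i) (enum_val j))%:R : 'F_2)).

From Pilot Require Import Defs.
From HB Require Import structures.
From mathcomp Require Import all_boot all_order all_algebra ring.
Import GRing.Theory.
Set Implicit Arguments. Unset Strict Implicit. Unset Printing Implicit Defensive.
Local Open Scope ring_scope.

(* Write A for the adjacency matrix of G and, for vectors
   x_1..x_p and y_1..y_q, call X A Y^T (rows of X = the x_i) their Gram
   matrix; rank_G(R,C) is the rank of the Gram matrix of the basis vectors
   of R and C.  Reducibility of W lets us attach to every vertex v a vector
   pr v in <W>^perp with v - pr v in <W>.  Then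
   (1) E^W(v,w) = E(pr v, pr w), so the adjacency matrix of Gamma_W(G) on
       W1 x W2 is the Gram matrix of (pr v)_{v in W1} and (pr w)_{w in W2};
   (2) the basis of W u W' spans the same space as the basis of W together
       with (pr v)_{v in W'};
   (3) a Gram matrix only depends on the row spaces of its two factors, so
       rank_G(W u W1, W u W2) is the rank of a block matrix whose
       off-diagonal blocks vanish because pr v is E-orthogonal to <W>.
   Hence rank_G(W u W1, W u W2) = rank_G(W) + rank_{Gamma_W(G)}(W1,W2). *)

Lemma mxrank_gram_eqmx (F : fieldType) n m m' p p' (M : 'M[F]_n)
    (X : 'M_(m, n)) (X' : 'M_(m', n)) (Y : 'M_(p, n)) (Y' : 'M_(p', n)) :
  (X :=: X')%MS -> (Y :=: Y')%MS ->
  \rank (X *m M *m Y^T) = \rank (X' *m M *m Y'^T).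
Proof.
move=> eqX eqY; rewrite -!mulmxA (eqmxMr _ eqX).
by rewrite -mxrank_tr -[RHS]mxrank_tr !trmx_mul !trmxK -!mulmxA (eqmxMr _ eqY).
Qed.

Lemma F2_eq1 (a : 'F_2) : ((a == 1)%:R : 'F_2) = a.
Proof. by apply/val_inj; case: a => [[|[|[]]] ?]. Qed.

Section Form.
Variables (V : finType) (adj : rel V).

Definition adjmx : 'M['F_2]_#|V| := \matrix_(i, j) (adj (enum_val i) (enum_val j))%:R.

Definition rowv (x : vec V) : 'rV['F_2]_#|V| := \row_k x (enum_val k).

Definition rows_of p (xs : 'I_p -> vec V) : 'M['F_2]_(p, #|V|) :=
  \matrix_(i, k) xs i (enum_val k).

Definition basis_rows (S : {set V}) : 'M['F_2]_(#|S|, #|V|) :=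
  rows_of (fun i : 'I_#|S| => bvec (enum_val i)).

Lemma row_basis_rows (S : {set V}) i : row i (basis_rows S) = rowv (bvec (enum_val i)).
Proof. by apply/rowP => k; rewrite !mxE. Qed.

Lemma rowvD (x y : vec V) : rowv (x + y) = rowv x + rowv y.
Proof. by apply/rowP => k; rewrite !mxE !ffunE. Qed.

Lemma gram_mx p q (xs : 'I_p -> vec V) (ys : 'I_q -> vec V) :
  rows_of xs *m adjmx *m (rows_of ys)^T = \matrix_(i, j) Eform adj (xs i) (ys j).
Proof.
apply/matrixP => i j; rewrite !mxE /Eform.
have sum_enum (F : V -> 'F_2) : \sum_v F v = \sum_(i < #|V|) F (enum_val i).
  exact: big_enum_val.
rewrite sum_enum [in RHS]exchange_big sum_enum /=.
apply: eq_bigr => k _; rewrite !mxE big_distrl /=.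
by apply: eq_bigr => l _; rewrite !mxE.
Qed.

Lemma Eform_bvec v w : Eform adj (bvec v) (bvec w) = (adj v w)%:R.
Proof.
rewrite /Eform (bigD1 v) //= [X in _ + X]big1 ?addr0; last first.
  by move=> u /negbTE hu; apply: big1 => u' _; rewrite ffunE hu !mul0r.
rewrite (bigD1 w) //= [X in _ + X]big1 ?addr0; last first.
  by move=> u /negbTE hu; rewrite [bvec w u]ffunE hu mulr0.
by rewrite !ffunE !eqxx mul1r mulr1.
Qed.

Lemma rankG_gram (R C : {set V}) :
  rankG adj R C = \rank (basis_rows R *m adjmx *m (basis_rows C)^T).
Proof.
rewrite gram_mx /rankG; congr (\rank _).
by apply/matrixP => i j; rewrite !mxE Eform_bvec.
Qed.

Lemma EformBl x y z : Eform adj (x - y) z = Eform adj x z - Eform adj y z.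
Proof.
rewrite /Eform -sumrB; apply: eq_bigr => v _; rewrite -sumrB.
by apply: eq_bigr => w _; rewrite !ffunE; ring.
Qed.

Lemma spanB (W : {set V}) x y :
  x \in Defs.span W -> y \in Defs.span W -> x - y \in Defs.span W.
Proof.
move=> /forallP hx /forallP hy; apply/forallP => u; apply/implyP => hu.
move: (hx u) (hy u); rewrite hu /= => /eqP hxu /eqP hyu.
by rewrite !ffunE hxu hyu subr0.
Qed.

Lemma span_subset (W W' : {set V}) x :
  W \subset W' -> x \in Defs.span W -> x \in Defs.span W'.
Proof.
move=> /subsetP sWW' /forallP hx; apply/forallP => u; apply/implyP => hu.
by apply: (implyP (hx u)); apply: contra hu; apply: sWW'.
Qed.

Lemma bvec_span (W : {set V}) w : w \in W -> bvec w \in Defs.span W.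
Proof.
move=> hw; apply/forallP => u; apply/implyP => hu; rewrite ffunE.
by case: (eqVneq u w) hu => [->|]; rewrite ?hw.
Qed.

Lemma span_submx (S : {set V}) x : x \in Defs.span S -> (rowv x <= basis_rows S)%MS.
Proof.
move=> /forallP hx; apply/submxP; exists (\row_i x (enum_val i)).
apply/rowP => k; rewrite !mxE.
have -> : \sum_j (\row_i x (enum_val i)) 0 j * basis_rows S j k =
          \sum_(u in S) x u * (enum_val k == u)%:R.
  by rewrite [RHS]big_enum_val; apply: eq_bigr => j _; rewrite !mxE ffunE.
rewrite big_mkcond (bigD1 (enum_val k)) //= big1 ?addr0; last first.
  by move=> u /negbTE hu; case: ifP => _ //; rewrite eq_sym hu mulr0.
rewrite eqxx mulr1; case: ifP => // notS.
by move: (hx (enum_val k)); rewrite notS => /eqP.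
Qed.

Lemma perp_span (W : {set V}) z y :
  z \in perpE adj W -> y \in Defs.span W -> Eform adj z y = 0.
Proof. by move=> /forallP /(_ y) /implyP h hy; apply/eqP/h. Qed.

Hypothesis adj_sym : symmetric adj.

Lemma EformC x y : Eform adj x y = Eform adj y x.
Proof.
rewrite /Eform exchange_big; apply: eq_bigr => v _; apply: eq_bigr => w _.
by rewrite adj_sym; ring.
Qed.

(* On <W>^perp, E does not see components in <W>: this makes E^W well
   defined. *)
Lemma Eform_perp_shift (W : {set V}) a a' b :
  b \in perpE adj W -> a - a' \in Defs.span W -> Eform adj a b = Eform adj a' b.
Proof.
move=> hb haa'; apply/eqP; rewrite -subr_eq0 -EformBl EformC.
by rewrite (perp_span hb haa').
Qed.

Section Reduction.
Variables (W : {set V}) (hW : reducible adj W).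

Definition pr (v : V) : vec V :=
  odflt 0 [pick z | (z \in perpE adj W) && (bvec v - z \in Defs.span W)].

Lemma pr_spec v : pr v \in perpE adj W /\ bvec v - pr v \in Defs.span W.
Proof.
rewrite /pr; case: pickP => [z /andP [] //|none].
have [y [z [hy hz decomp]]] := hW (bvec v).
by move: (none z); rewrite hz decomp addrK hy.
Qed.

(* pr v = v - (v - pr v) lies in <S> as soon as v is in S and W in S. *)
Lemma pr_span (S : {set V}) v :
  v \in S -> W \subset S -> pr v \in Defs.span S.
Proof.
move=> vS sWS.
have -> : pr v = bvec v - (bvec v - pr v) by rewrite opprB addrC subrK.
by apply: spanB; [apply: bvec_span | apply: span_subset sWS (proj2 (pr_spec v))].
Qed.

Lemma EW_pr v w : EW adj W (bvec v) (bvec w) = (Eform adj (pr v) (pr w) == 1).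
Proof.
have [pv sv] := pr_spec v; have [pw sw] := pr_spec w.
apply/existsP/idP => [[x1 /existsP [x2 /and5P [p1 _ s1 s2 /eqP <-]]]|h].
  have diff (a b c : vec V) : (c - a) - (c - b) = b - a.
    by rewrite opprB addrC addrA subrK.
  have s1' := spanB s1 sv; have s2' := spanB s2 sw; rewrite !diff in s1' s2'.
  (* E(pr v, pr w) = E(x1, pr w) = E(x1, x2) *)
  by rewrite (Eform_perp_shift pw s1') EformC (Eform_perp_shift p1 s2') EformC.
by exists (pr v); apply/existsP; exists (pr w); rewrite pv pw sv sw h.
Qed.

Definition proj_rows (S : {set V}) : 'M['F_2]_(#|S|, #|V|) :=
  rows_of (fun i : 'I_#|S| => pr (enum_val i)).

Lemma row_proj_rows (S : {set V}) i : row i (proj_rows S) = rowv (pr (enum_val i)).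
Proof. by apply/rowP => k; rewrite !mxE. Qed.

Lemma basis_rows_setU (S : {set V}) :
  (basis_rows (W :|: S) :=: col_mx (basis_rows W) (proj_rows S))%MS.
Proof.
apply/eqmxP/andP; split.
  apply/row_subP => i; rewrite row_basis_rows.
  rewrite -addsmxE; set v := enum_val i.
  have : v \in W :|: S by apply: enum_valP.
  rewrite in_setU => /orP [vW|vS].
    by apply: submx_trans (addsmxSl _ _); apply: span_submx; apply: bvec_span.
  rewrite -[bvec v](subrK (pr v)) rowvD; apply: addmx_sub_adds.
    exact: span_submx (proj2 (pr_spec v)).
  by rewrite -(enum_rankK_in vS vS) -row_proj_rows row_sub.
rewrite -addsmxE addsmx_sub; apply/andP; split; apply/row_subP => i;
  rewrite (row_basis_rows, row_proj_rows); apply: span_submx.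
  by apply: bvec_span; rewrite in_setU enum_valP.
by apply: pr_span; [rewrite in_setU enum_valP orbT | apply: subsetUl].
Qed.

(* rank_G(W u W1, W u W2) splits as rank_G(W) plus the rank of the Gram
   matrix of the perp components: the off-diagonal blocks vanish. *)
Lemma rankG_setU (W1 W2 : {set V}) :
  rankG adj (W :|: W1) (W :|: W2) =
  (rankG adj W W + \rank (proj_rows W1 *m adjmx *m (proj_rows W2)^T))%N.
Proof.
rewrite rankG_gram (mxrank_gram_eqmx _ (basis_rows_setU W1) (basis_rows_setU W2)).
rewrite tr_col_mx mul_col_mx mul_col_row.
have -> : basis_rows W *m adjmx *m (proj_rows W2)^T = 0.
  rewrite gram_mx; apply/matrixP => i j; rewrite !mxE EformC.
  exact: perp_span (proj1 (pr_spec _)) (bvec_span (enum_valP _)).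
have -> : proj_rows W1 *m adjmx *m (basis_rows W)^T = 0.
  rewrite gram_mx; apply/matrixP => i j; rewrite !mxE.
  exact: perp_span (proj1 (pr_spec _)) (bvec_span (enum_valP _)).
by rewrite rank_diag_block_mx rankG_gram.
Qed.

Lemma rankG_gamma (W1 W2 : {set V}) : W1 \subset ~: W -> W2 \subset ~: W ->
  rankG (gamma adj W) W1 W2 = \rank (proj_rows W1 *m adjmx *m (proj_rows W2)^T).
Proof.
move=> /subsetP sW1 /subsetP sW2; rewrite gram_mx /rankG; congr (\rank _).
apply/matrixP => i j; rewrite !mxE /gamma.
rewrite -!in_setC sW1 ?sW2 ?enum_valP //=.
by rewrite EW_pr F2_eq1.
Qed.

End Reduction.
End Form.

Theorem mainTheorem3 (V : finType) (adj : rel V) (adj_sym : symmetric adj)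
  (W : {set V}) (hW : reducible adj W) (W1 W2 : {set V})
  (hW1 : W1 \subset ~: W) (hW2 : W2 \subset ~: W) :
  (rankG (gamma adj W) W1 W2)%:Z =
  (rankG adj (W :|: W1) (W :|: W2))%:Z - (rankG adj W W)%:Z.
Proof.
rewrite (rankG_setU adj_sym hW) (rankG_gamma adj_sym hW hW1 hW2).
by rewrite PoszD addrAC subrr add0r.
Qed.
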